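(* Let $G$ be a strongly connected directed co-graph with co-tree $T$, let $\hat{w}$ be an inner node of $T$, and let $R_{\hat{w}}\subseteq V(G_{\hat{w}})$ be a resolving set for $V(G_{\hat{w}})$ in $G$ such that $G_{\hat{w}}$ has a 1-vertex $u_1$ and a 2-vertex $u_2$ w.r.t. $R_{\hat{w}}$. Then there is no vertex $v\in V(G_{\hat{w}})\setminus\{u_1,u_2\}$ such that $R_{\hat{w}}\cup\{v\}$ is a resolving set for $V(G_{\hat{w}})$ in $G$ and $G_{\hat{w}}$ has neither a 1-vertex nor a 2-vertex w.r.t. $R_{\hat{w}}\cup\{v\}$.
   Context: All graphs are finite and simple. For vertices $u,v$ of a directed graph $G$, $d_G(u,v)$ is the length of a shortest directed path from $u$ to $v$ (undefined if none exists); $G$ is strongly connected if directed paths exist in both directions between any two vertices. A vertex $w$ resolves two distinct vertices $u,v$ in $G$ if $w=u$, or $w=v$, or there are paths from $w$ to $u$ and from $w$ to $v$ with $d_G(w,u)\neq d_G(w,v)$. For $U\subseteq V(G)$, a set $R\subseteq U$ is a resolving set for $U$ in $G$ if every pair of distinct vertices of $U$ is resolved in $G$ by some vertex of $R$. Directed co-graphs and co-trees: a single vertex $u$ is a directed co-graph whose co-tree is a single leaf associated with $u$. If $G_1,G_2$ are directed co-graphs on disjoint vertex sets with co-trees $T_1,T_2$, then the disjoint union (edge set $E(G_1)\cup E(G_2)$), the join (additionally all edges $(u,v),(v,u)$ with $u\in V(G_1),v\in V(G_2)$) and the directed join (additionally all edges $(u,v)$ with $u\in V(G_1),v\in V(G_2)$),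 each on vertex set $V(G_1)\cup V(G_2)$, are directed co-graphs; the co-tree is obtained by adding a new root (labelled by the operation) whose two successors are the roots of $T_1$ and $T_2$. Non-leaf nodes are inner nodes. For a node $\hat{w}$ of $T$, $G_{\hat{w}}$ is the subgraph of $G$ induced by the vertices associated with the leaves of the subtree rooted at $\hat{w}$. For a directed graph $H$ and a nonempty $R\subseteq V(H)$, a vertex $u\in V(H)\setminus R$ is a 1-vertex w.r.t. $R$ if $(w,u)\in E(H)$ for all $w\in R$, and a 2-vertex w.r.t. $R$ if $(w,u)\notin E(H)$ for all $w\in R$. *)

From mathcomp Require Import all_boot.
Set Implicit Arguments. Unset Strict Implicit. Unset Printing Implicit Defensive.

Inductive cotree (V : Type) : Type :=
| CLeaf of V
| CUnion of cotree V & cotree V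
| CJoin of cotree V & cotree V
| CDJoin of cotree V & cotree V.       (* directed join: all edges left -> right *)

Section Cotree.
Variable V : eqType.

Fixpoint leaves (t : cotree V) : seq V :=
  match t with
  | CLeaf v => [:: v]
  | CUnion a b | CJoin a b | CDJoin a b => leaves a ++ leaves b
  end.

(* well-formedness: the two operands have disjoint vertex sets (recursively) *)
Definition cotree_wf (t : cotree V) : bool := uniq (leaves t).

Fixpoint cog_edge (t : cotree V) (x y : V) : bool :=
  match t with
  | CLeaf _ => false
  | CUnion a b => cog_edge a x y || cog_edge b x y
  | CJoin a b => [|| cog_edge a x y, cog_edge b x y,
                     (x \in leaves a) && (y \in leaves b) |
                     (y \in leaves a) && (x \in leaves b)]
  | CDJoin a b => [|| cog_edge a x y, cog_edge b x y |
                      (x \in leaves a) && (y \in leaves b)]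
  end.

Fixpoint subtree (s t : cotree V) : Prop :=
  s = t \/
  match t with
  | CLeaf _ => False
  | CUnion a b | CJoin a b | CDJoin a b => subtree s a \/ subtree s b
  end.

Definition inner (t : cotree V) : Prop :=
  match t with CLeaf _ => False | _ => True end.
End Cotree.

Section Dist.
Variable V : finType.
Variable e : rel V.

Definition walk_len (x y : V) (k : nat) : Prop :=
  exists p : seq V, [/\ size p = k, path e x p & last x p = y].

Definition is_dist (x y : V) (d : nat) : Prop :=
  walk_len x y d /\ forall k, k < d -> ~ walk_len x y k.

Definition strongly_connected : Prop := forall x y : V, connect e x y.

Definition resolves (w u v : V) : Prop :=
  w = u \/ w = v \/
  exists du dv, [/\ is_dist w u du, is_dist w v dv & du <> dv].

Definition resolving_for (R U : {set V}) : Prop :=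
  R \subset U /\
  forall u v, u \in U -> v \in U -> u <> v -> exists2 w, w \in R & resolves w u v.

Definition one_vertex (U R : {set V}) (u : V) : Prop :=
  [/\ R != set0, u \in U, u \notin R & forall w, w \in R -> e w u].
Definition two_vertex (U R : {set V}) (u : V) : Prop :=
  [/\ R != set0, u \in U, u \notin R & forall w, w \in R -> ~~ e w u].
End Dist.

Definition vset (V : finType) (t : cotree V) : {set V} := [set x | x \in leaves t].

From mathcomp Require Import all_boot.
Set Implicit Arguments.
Unset Strict Implicit.
Unset Printing Implicit Defensive.

(* Adding v must destroy both special vertices, so v -/-> u1 and v -> u2.  In
   a strongly connected co-graph the root is a join, so any two distinct
   vertices are at distance 1 or 2, and a vertex r resolves u and v exactly
   when it is adjacent to one of them.  The vertices r1, r2 of R resolving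
   (v, u1) and (v, u2) therefore satisfy r1 -/-> v and r2 -> v.  Together with
   R -> u1 and R -/-> u2 this is an adjacency pattern on five vertices that no
   directed co-graph contains: a pattern spread over both sides of a union or
   join is impossible because the edges across the two sides are uniform. *)

Section Digraphs.
Variables (V : finType) (e : rel V).

Lemma is_dist_uniq x y d1 d2 : is_dist e x y d1 -> is_dist e x y d2 -> d1 = d2.
Proof.
move=> [walk1 min1] [walk2 min2].
have [lt12|lt21|//] := ltngtP d1 d2.
  by case: (min2 _ lt12).
by case: (min1 _ lt21).
Qed.

Lemma is_dist1 x y : x <> y -> e x y -> is_dist e x y 1.
Proof.
move=> neq_xy exy; split; first by exists [:: y]; rewrite /= exy.
by case=> // _ [p [size_p _ last_p]]; case: p size_p last_p.
Qed.

Lemma is_dist2 x y z :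
  x <> y -> ~~ e x y -> e x z -> e z y -> is_dist e x y 2.
Proof.
move=> neq_xy nexy exz ezy; split.
  by exists [:: z; y]; rewrite /= exz ezy.
case=> [|[|//]] _ [p [size_p walk_p last_p]].
  by case: p size_p walk_p last_p.
case: p size_p walk_p last_p => [|t [|//]] //= _.
by rewrite andbT => ext last_t; rewrite -last_t ext in nexy.
Qed.

Lemma resolves_dist w u v du dv :
  resolves e w u v -> w <> u -> w <> v ->
  is_dist e w u du -> is_dist e w v dv -> du <> dv.
Proof.
move=> [->|[->|[du' [dv' [du'P dv'P neq_d]]]]] // _ _ duP dvP.
by rewrite -(is_dist_uniq du'P duP) -(is_dist_uniq dv'P dvP).
Qed.

Lemma out_closed_not_strongly_connected (S : pred V) x y :
  (forall x' y', S x' -> e x' y' -> S y') -> S x -> ~~ S y ->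
  ~ strongly_connected e.
Proof.
move=> closedS + /negP nSy /(_ x y)/connectP[p].
elim: p x => [|z p IHp] x Sx /=.
  by move=> _ eq_yx; apply: nSy; rewrite eq_yx.
by case/andP=> exz; apply: IHp (closedS _ _ Sx exz).
Qed.

Lemma one_vertex_setU1 U R u v :
  one_vertex e U R u -> v <> u -> e v u -> one_vertex e U (v |: R) u.
Proof.
move=> [_ uU uR eRu] neq_vu evu; split=> //.
- by apply/set0Pn; exists v; rewrite setU11.
- by rewrite in_setU1 negb_or uR andbT eq_sym; apply/eqP.
- by move=> w /setU1P[->|/eRu].
Qed.

Lemma two_vertex_setU1 U R u v :
  two_vertex e U R u -> v <> u -> ~~ e v u -> two_vertex e U (v |: R) u.
Proof.
move=> [_ uU uR eRu] neq_vu evu; split=> //.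
- by apply/set0Pn; exists v; rewrite setU11.
- by rewrite in_setU1 negb_or uR andbT eq_sym; apply/eqP.
- by move=> w /setU1P[->|/eRu].
Qed.

End Digraphs.

Section Cographs.
Variable V : finType.
Implicit Types (a b t : cotree V) (x y z : V).

Lemma cog_edge_leaves t x y :
  cog_edge t x y -> (x \in leaves t) && (y \in leaves t).
Proof.
elim: t => [//|a IHa b IHb|a IHa b IHb|a IHa b IHb] /=; rewrite !mem_cat.
- by case/orP=> [/IHa|/IHb] /andP[-> ->]; rewrite ?orbT.
- by case/or4P=> [/IHa|/IHb||] /andP[-> ->]; rewrite ?orbT.
- by case/or3P=> [/IHa|/IHb|] /andP[-> ->]; rewrite ?orbT.
Qed.

Lemma leaves_nonempty t : exists x, x \in leaves t.
Proof.
elim: t => [x|a [x xa] b _|a [x xa] b _|a [x xa] b _];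
  by exists x; rewrite /= ?mem_seq1 ?mem_cat ?xa.
Qed.

Lemma strongly_connected_cotree_join t x y :
  uniq (leaves t) -> (forall z, z \in leaves t) ->
  strongly_connected (cog_edge t) -> x <> y -> exists a b, t = CJoin a b.
Proof.
case: t => [z|a b|a b|a b] + cover sc neq_xy; [| | by exists a, b |].
- by case: neq_xy; move: (cover x) (cover y); rewrite /= !inE => /eqP-> /eqP->.
- rewrite /= cat_uniq => /and3P[_ /hasPn disj _].
  have [[xa xaP] [yb ybP]] := (leaves_nonempty a, leaves_nonempty b).
  exfalso.
  apply: (out_closed_not_strongly_connected (S := mem (leaves a)) (y := yb)
           _ xaP _ sc).
  + move=> x' y' /= x'a /orP[/cog_edge_leaves/andP[_ //]|].
    by move/cog_edge_leaves/andP=> [/disj]; rewrite x'a.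
  + by apply/negP=> /= yba; move: (disj _ ybP); rewrite yba.
- rewrite /= cat_uniq => /and3P[_ /hasPn disj _].
  have [[xa xaP] [yb ybP]] := (leaves_nonempty a, leaves_nonempty b).
  exfalso.
  apply: (out_closed_not_strongly_connected (S := mem (leaves b)) (y := xa)
           _ ybP _ sc).
  + move=> x' y' /= x'b.
    have x'a : x' \notin leaves a := disj _ x'b.
    by case/or3P=> [/cog_edge_leaves|/cog_edge_leaves/andP[_ //]|];
      rewrite (negbTE x'a).
  + by apply/negP=> /= xab; move: (disj _ xab); rewrite xaP.
Qed.

Lemma cjoin_nonedge_common_neighbor a b x y :
  x \in leaves (CJoin a b) -> y \in leaves (CJoin a b) ->
  ~~ cog_edge (CJoin a b) x y ->
  exists z, cog_edge (CJoin a b) x z && cog_edge (CJoin a b) z y.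
Proof.
have [[za zaP] [zb zbP]] := (leaves_nonempty a, leaves_nonempty b).
rewrite /= !mem_cat => /orP[xa|xb] /orP[ya|yb];
  rewrite ?xa ?xb ?ya ?yb ?orbT //.
- by exists zb; rewrite zbP !orbT.
- by exists za; rewrite zaP !orbT.
Qed.

Lemma cotree_dist_nonedge t x y :
  uniq (leaves t) -> (forall z, z \in leaves t) ->
  strongly_connected (cog_edge t) ->
  x <> y -> ~~ cog_edge t x y -> is_dist (cog_edge t) x y 2.
Proof.
move=> uniq_t cover sc neq_xy nexy.
have [a [b def_t]] := strongly_connected_cotree_join uniq_t cover sc neq_xy.
have [z /andP[exz ezy]] : exists z, cog_edge t x z && cog_edge t z y.
  move: (cover x) (cover y) nexy; rewrite def_t.
  exact: cjoin_nonedge_common_neighbor.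
exact: is_dist2 exz ezy.
Qed.

Lemma cotree_resolves_edge t r u v :
  uniq (leaves t) -> (forall z, z \in leaves t) ->
  strongly_connected (cog_edge t) ->
  resolves (cog_edge t) r u v -> r <> u -> r <> v ->
  cog_edge t r u != cog_edge t r v.
Proof.
move=> uniq_t cover sc res neq_ru neq_rv; apply/negP => /eqP same_edge.
have dist x :
    r <> x -> is_dist (cog_edge t) r x (if cog_edge t r x then 1 else 2).
  move=> neq_rx; case: ifP => [|/negbT]; first exact: is_dist1.
  exact: cotree_dist_nonedge.
apply: (resolves_dist res neq_ru neq_rv (dist _ neq_ru) (dist _ neq_rv)).
by rewrite same_edge.
Qed.

Definition obstruction (E : rel V) (r1 r2 v u1 u2 : V) : bool :=
  [&& E r1 u1, E r2 u1, E v u2, E r2 v,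
      ~~ E r1 u2, ~~ E r2 u2, ~~ E v u1 & ~~ E r1 v].

Definition obstruction_free (E : rel V) : Prop :=
  forall r1 r2 v u1 u2, ~~ obstruction E r1 r2 v u1 u2.

Lemma obstruction_free_compose a b (cross_ab cross_ba : bool) (E : rel V) :
  uniq (leaves a ++ leaves b) ->
  (forall x y, E x y = [|| cog_edge a x y, cog_edge b x y,
                          [&& cross_ab, x \in leaves a & y \in leaves b] |
                          [&& cross_ba, y \in leaves a & x \in leaves b]]) ->
  obstruction_free (cog_edge a) -> obstruction_free (cog_edge b) ->
  obstruction_free E.
Proof.
rewrite cat_uniq => /and3P[_ /hasPn disj _] defE free_a free_b.
move=> r1 r2 v u1 u2.
have {}defE x y : E x y =
    [|| [&& x \in leaves a, y \in leaves a & cog_edge a x y],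
        [&& x \in leaves b, y \in leaves b & cog_edge b x y],
        [&& cross_ab, x \in leaves a & y \in leaves b] |
        [&& cross_ba, y \in leaves a & x \in leaves b]].
  rewrite defE; case eab: (cog_edge a x y); case ebb: (cog_edge b x y) => //=.
  - by have /andP[-> ->] := cog_edge_leaves eab.
  - by have /andP[-> ->] := cog_edge_leaves eab.
  - by have /andP[-> ->] := cog_edge_leaves ebb; rewrite !andbT orbT.
  - by rewrite !andbF.
have ends x y :
    E x y -> (x \in leaves a ++ leaves b) && (y \in leaves a ++ leaves b).
  rewrite defE !mem_cat.
  by case/or4P=> /and3P[] => [-> -> _|-> -> _|_ -> ->|_ -> ->]; rewrite ?orbT.
have side x :
    x \in leaves a ++ leaves b -> (x \in leaves b) = ~~ (x \in leaves a).
  rewrite mem_cat; case xb: (x \in leaves b); last by rewrite orbF => ->.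
  by rewrite (negbTE (disj _ xb)).
apply/negP => obs.
have /and3P[/ends/andP[r1ab u1ab] /ends/andP[r2ab _]] := obs.
case/and3P=> /ends/andP[vab u2ab] _ _.
move: obs; rewrite /obstruction !defE; clear defE ends.
rewrite (side _ r1ab) (side _ r2ab) (side _ vab) (side _ u1ab) (side _ u2ab).
case: (r1 \in leaves a); case: (r2 \in leaves a); case: (v \in leaves a);
  case: (u1 \in leaves a); case: (u2 \in leaves a);
  case: cross_ab; case: cross_ba; rewrite /= ?orbF ?andbF //.
all: first [ by move/negP: (free_a r1 r2 v u1 u2)
           | by move/negP: (free_b r1 r2 v u1 u2) ].
Qed.

Lemma cotree_obstruction_free t :
  uniq (leaves t) -> obstruction_free (cog_edge t).
Proof.
elim: t => [x|a IHa b IHb|a IHa b IHb|a IHa b IHb] /= uniq_t; first by [].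
all: move: (uniq_t); rewrite cat_uniq => /and3P[/IHa free_a _ /IHb free_b].
- apply: (obstruction_free_compose (a := a) (b := b)
           (cross_ab := false) (cross_ba := false)) => // x y.
  by rewrite /= !orbF.
- exact: (obstruction_free_compose (a := a) (b := b)
           (cross_ab := true) (cross_ba := true)).
- apply: (obstruction_free_compose (a := a) (b := b)
           (cross_ab := true) (cross_ba := false)) => // x y.
  by rewrite /= orbF.
Qed.

End Cographs.

Theorem lemma3 (V : finType) (T : cotree V)
  (wfT : cotree_wf T) (covT : forall x : V, x \in leaves T)
  (scG : strongly_connected (cog_edge T))
  (w : cotree V) (w_node : subtree w T) (w_inner : inner w)
  (R : {set V}) (HR : resolving_for (cog_edge T) R (vset w))
  (u1 u2 : V)
  (Hu1 : one_vertex (cog_edge T) (vset w) R u1)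
  (Hu2 : two_vertex (cog_edge T) (vset w) R u2) :
  ~ exists v : V,
      [/\ v \in vset w, v <> u1, v <> u2,
          resolving_for (cog_edge T) (v |: R) (vset w) &
          (forall x, ~ one_vertex (cog_edge T) (vset w) (v |: R) x /\
                     ~ two_vertex (cog_edge T) (vset w) (v |: R) x)].
Proof.
move=> [v [vw neq_vu1 neq_vu2 _ no_extremal]].
have nevu1 : ~~ cog_edge T v u1.
  apply/negP => evu1; case: (no_extremal u1) => + _; apply.
  exact: one_vertex_setU1 Hu1 neq_vu1 evu1.
have evu2 : cog_edge T v u2.
  apply/negPn/negP => nevu2; case: (no_extremal u2) => _; apply.
  exact: two_vertex_setU1 Hu2 neq_vu2 nevu2.
case: Hu1 => _ u1w u1R eRu1; case: Hu2 => _ u2w u2R neRu2.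
have vR : v \notin R by apply: contra nevu1 => /eRu1.
have neqR x r : x \notin R -> r \in R -> r <> x.
  by move=> xR rR; apply/eqP; exact: memPn xR r rR.
have resolver x u r : x \notin R -> u \notin R -> r \in R ->
    resolves (cog_edge T) r x u -> cog_edge T r x != cog_edge T r u.
  move=> xR uR rR /cotree_resolves_edge; apply=> //; exact: neqR.
case: HR => _ resolve.
have [r1 r1R /(resolver _ _ _ vR u1R r1R)] := resolve v u1 vw u1w neq_vu1.
rewrite eRu1 // eqb_id => /negbTE er1v.
have [r2 r2R /(resolver _ _ _ vR u2R r2R)] := resolve v u2 vw u2w neq_vu2.
rewrite (negbTE (neRu2 _ r2R)) eqbF_neg negbK => er2v.
apply/negP: (cotree_obstruction_free wfT r1 r2 v u1 u2).
rewrite /obstruction (eRu1 _ r1R) (eRu1 _ r2R) evu2 er2v.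
by rewrite (neRu2 _ r1R) (neRu2 _ r2R) nevu1 er1v.
Qed.
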